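(* Let $G$ be a hypo-efficient domination graph. Then $|V(G)|\leq\gamma(G)(\Delta(G)+1)-1$. Moreover: (i) Suppose $|V(G)|=\gamma(G)(\Delta(G)+1)-1$. Then (a) for every $\gamma$-set $D$ of $G$ there is exactly one vertex $y_D\in V(G)\setminus D$ such that $D$ is an efficient dominating set of $G-y_D$, and $y_D$ is adjacent to exactly $2$ vertices of $D$; and (b) every vertex belonging to some $\gamma$-set of $G$ has degree $\Delta(G)$. In particular, if every vertex of $G$ belongs to some $\gamma$-set of $G$, then $G$ is regular. (ii) If there exist a $\gamma$-set $D$ of $G$ and a vertex $y\in V(G)\setminus D$ such that $D$ is an efficient dominating set of $G-y$, $y$ is adjacent to exactly $2$ vertices of $D$, and every vertex of $D$ has degree $\Delta(G)$, then $|V(G)|=\gamma(G)(\Delta(G)+1)-1$.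
   Context: All graphs are finite, simple and undirected. For $v\in V(G)$, $N[v]$ is the closed neighborhood of $v$. A set $D\subseteq V(G)$ is dominating if every vertex of $G$ not in $D$ has a neighbor in $D$; $\gamma(G)$ is the minimum size of a dominating set, and a dominating set of size $\gamma(G)$ is a $\gamma$-set. A set $D\subseteq V(H)$ is an efficient dominating set (EDS) of a graph $H$ if $|N_H[v]\cap D|=1$ for every $v\in V(H)$. $G$ is a hypo-efficient domination graph if $G$ has no EDS but $G-v$ has at least one EDS for every $v\in V(G)$. $\Delta(G)$ is the maximum degree. *)

(* A finite simple graph is a symmetric irreflexive
   relation e on a finType T; V(G) = T. *)
From mathcomp Require Import all_boot all_order.
Set Implicit Arguments. Unset Strict Implicit. Unset Printing Implicit Defensive.

Section Graph.
Variables (T : finType) (e : rel T).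

Definition nbhd (v : T) : {set T} := [set u | e v u].
Definition cnbhd (v : T) : {set T} := v |: nbhd v.
Definition deg (v : T) : nat := #|nbhd v|.
Definition maxdeg : nat := \max_(v : T) deg v.
Definition regular : Prop := forall u v : T, deg u = deg v.

Definition dominating (D : {set T}) : Prop :=
  forall v : T, v \notin D -> exists2 u, u \in D & e v u.
Definition dominatingb (D : {set T}) : bool :=
  [forall v, (v \notin D) ==> [exists u, (u \in D) && e v u]].
(* gamma(G): minimum size of a dominating set (setT is dominating) *)
Definition gamma : nat :=
  #|[arg min_(D < [set: T] | dominatingb D) #|D|]|.
Definition gamma_set (D : {set T}) : Prop := dominating D /\ #|D| = gamma.

Definition eds (D : {set T}) : Prop := forall v : T, #|cnbhd v :&: D| = 1.
(* efficient dominating set of G - y : D is a set of vertices of G - y and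
   every vertex u <> y satisfies |N_{G-y}[u] ∩ D| = 1
   (N_{G-y}[u] = N[u] \ {y}, and y \notin D). *)
Definition eds_del (y : T) (D : {set T}) : Prop :=
  y \notin D /\ forall u : T, u != y -> #|(cnbhd u :\ y) :&: D| = 1.

Definition hypo_efficient : Prop :=
  (~ exists D, eds D) /\ (forall v : T, exists D, eds_del v D).
End Graph.

From mathcomp Require Import all_boot all_order zify.
Set Implicit Arguments. Unset Strict Implicit. Unset Printing Implicit Defensive.

(** Counting the pairs (v, d) with d in D and v in N[d] in two ways gives
    |V| + exc(D) = sum_(d in D) (deg d + 1) <= |D| (Delta + 1), where
    exc(D) = sum_v (|N[v] ∩ D| - 1) measures how far the dominating set D is
    from being efficient.  As G has no EDS, exc(D) >= 1 for every gamma-set,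
    whence the bound.  Equality forces exc(D) = 1 and all degrees in D to be
    Delta; exc(D) = 1 says that exactly one vertex y sees two vertices of D,
    and such a y lies outside D, so D is an EDS of G - y.  Conversely these
    data give exc(D) = 1 and equality in the degree bound. *)

Section Excess.
Variables (T : finType) (e : rel T).
Hypotheses (e_sym : symmetric e) (e_irr : irreflexive e).

Definition excess (D : {set T}) : nat := \sum_v (#|cnbhd e v :&: D|).-1.

Lemma card_cnbhd v : #|cnbhd e v| = (deg e v).+1.
Proof. by rewrite cardsU1 inE e_irr. Qed.

Lemma deg_le_maxdeg v : deg e v <= maxdeg e.
Proof. exact: leq_bigmax. Qed.

Lemma in_cnbhdC u v : (u \in cnbhd e v) = (v \in cnbhd e u).
Proof. by rewrite !inE eq_sym e_sym. Qed.

Lemma sum_card_cnbhdI (D : {set T}) :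
  \sum_v #|cnbhd e v :&: D| = \sum_(d in D) (deg e d).+1.
Proof.
transitivity (\sum_v \sum_(d in D) ((v \in cnbhd e d) : nat)).
  apply: eq_bigr => v _; rewrite -sum1_card [RHS]big_mkcond [LHS]big_mkcond /=.
  apply: eq_bigr => d _; rewrite inE in_cnbhdC.
  by case: (d \in D); case: (v \in _).
rewrite exchange_big; apply: eq_bigr => d _.
rewrite -card_cnbhd -sum1_card [RHS]big_mkcond.
by apply: eq_bigr => v _; case: (v \in _).
Qed.

Lemma dominating_cnbhdI_gt0 (D : {set T}) v :
  dominating e D -> 0 < #|cnbhd e v :&: D|.
Proof.
move=> domD; apply/card_gt0P; case vD: (v \in D).
  by exists v; rewrite !inE eqxx vD.
have [u uD evu] := domD v (negbT vD).
by exists u; rewrite !inE uD evu orbT.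
Qed.

Lemma card_add_excess (D : {set T}) : dominating e D ->
  #|T| + excess D = \sum_(d in D) (deg e d).+1.
Proof.
move=> domD; rewrite -sum_card_cnbhdI -sum1_card -big_split /=.
by apply: eq_bigr => v _; rewrite add1n prednK ?dominating_cnbhdI_gt0.
Qed.

Lemma sum_deg_leqif (D : {set T}) :
  \sum_(d in D) (deg e d).+1 <= #|D| * (maxdeg e + 1)
    ?= iff [forall (d | d \in D), deg e d == maxdeg e].
Proof.
rewrite -sum1_card big_distrl /=.
apply: leqif_sum => d _; rewrite mul1n addn1.
by split; rewrite ?ltnS ?eqSS ?deg_le_maxdeg.
Qed.

Lemma excess_gt0 (D : {set T}) : dominating e D -> ~ eds e D -> 0 < excess D.
Proof.
move=> domD not_eds; rewrite lt0n; apply: contra_notN not_eds.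
rewrite sum_nat_eq0 => /forallP excess0 v.
have := dominating_cnbhdI_gt0 v domD; have := excess0 v; rewrite implyTb.
by case: #|_| => [|[]].
Qed.

Lemma excess_eq1P (D : {set T}) : dominating e D ->
  excess D = 1 <->
  exists y, #|cnbhd e y :&: D| = 2 /\
            forall w, w != y -> #|cnbhd e w :&: D| = 1.
Proof.
move=> domD; have ge1 w := dominating_cnbhdI_gt0 w domD.
split=> [excess1 | [y [y2 others1]]]; last first.
  by rewrite /excess (bigD1 y) //= y2 big1 // => w /others1 ->.
have [y y_ge2] : exists y, 1 < #|cnbhd e y :&: D|.
  apply/existsP; apply: contraT; rewrite negb_exists => /forallP le1.
  move: excess1; rewrite /excess big1 // => w _.
  by have := le1 w; have := ge1 w; case: #|_| => [|[|]].
have sumE : excess D = (#|cnbhd e y :&: D|).-1 +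
                       \sum_(u | u != y) (#|cnbhd e u :&: D|).-1.
  by rewrite /excess (bigD1 y).
rewrite excess1 in sumE; exists y; split; first lia.
by move=> w wy; move: sumE; rewrite (bigD1 w) //=; have := ge1 w; lia.
Qed.

Lemma setD1I_notin (A D : {set T}) y : y \notin D -> (A :\ y) :&: D = A :&: D.
Proof.
move=> yD; apply/setP => x; rewrite !inE.
by case: (eqVneq x y) => [->|]; rewrite ?(negbTE yD) ?andbF.
Qed.

Lemma eds_delE (D : {set T}) y : y \notin D ->
  eds_del e y D <-> forall u, u != y -> #|cnbhd e u :&: D| = 1.
Proof.
move=> yD; split=> [[_ one] u uy | one].
  by rewrite -(one u uy) setD1I_notin.
by split=> // u uy; rewrite setD1I_notin ?one.
Qed.

Lemma card_nbhdI_notin (D : {set T}) y :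
  y \notin D -> #|nbhd e y :&: D| = #|cnbhd e y :&: D|.
Proof.
by move=> yD; rewrite -(setD1I_notin (cnbhd e y) yD) setU1K // inE e_irr.
Qed.

Lemma doubled_notin (D : {set T}) y :
  #|cnbhd e y :&: D| = 2 -> (forall w, w != y -> #|cnbhd e w :&: D| = 1) ->
  y \notin D.
Proof.
move=> y2 others1; apply/negP => yD.
have [d]: exists d, d \in (cnbhd e y :&: D) :\ y.
  apply/set0Pn; rewrite -card_gt0.
  by move: y2; rewrite (cardsD1 y) !inE eqxx yD; case: #|_|.
rewrite !inE => /and3P [dy ydy dD].
(* d would see two vertices of D: itself and y. *)
suff /subset_leq_card : [set d; y] \subset cnbhd e d :&: D.
  by rewrite cards2 dy others1.
apply/subsetP => x.
rewrite !inE => /orP[] /eqP ->; first by rewrite eqxx dD.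
by rewrite yD andbT eq_sym e_sym.
Qed.

Lemma eds_del_uniq (D : {set T}) y z :
  #|cnbhd e y :&: D| = 2 -> z \notin D -> eds_del e z D -> z = y.
Proof.
move=> y2 zD /(eds_delE zD) one; apply/eqP; apply: contraT => zy.
by move: y2; rewrite one // eq_sym.
Qed.

Lemma gamma_set_exists : exists D, gamma_set e D.
Proof.
rewrite /gamma_set /gamma; case: arg_minnP => [|D domD _].
  by apply/forallP => v; rewrite inE.
exists D; split=> // v vD.
by have /existsP[u /andP[]] := implyP (forallP domD v) vD; exists u.
Qed.

Lemma excess1_eds_del (D : {set T}) : dominating e D -> excess D = 1 ->
  exists y, [/\ y \notin D, eds_del e y D, #|nbhd e y :&: D| = 2
              & forall z, z \notin D -> eds_del e z D -> z = y].
Proof.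
move=> domD /(excess_eq1P domD) [y [y2 others1]].
have yD := doubled_notin y2 others1.
exists y; split=> //; first exact/eds_delE.
- by rewrite card_nbhdI_notin.
- by move=> z zD /(eds_del_uniq y2 zD).
Qed.

Lemma eds_del_excess1 (D : {set T}) y : dominating e D -> y \notin D ->
  eds_del e y D -> #|nbhd e y :&: D| = 2 -> excess D = 1.
Proof.
move=> domD yD /(eds_delE yD) others1 y2; apply/(excess_eq1P domD).
by exists y; rewrite -card_nbhdI_notin.
Qed.

Lemma card_le_excess_bound (D : {set T}) : dominating e D -> ~ eds e D ->
  #|T| <= #|D| * (maxdeg e + 1) - 1.
Proof.
move=> domD not_eds; have := card_add_excess domD.
have := excess_gt0 domD not_eds; have := (sum_deg_leqif D).1; lia.
Qed.

Lemma card_eq_excess_bound (D : {set T}) : dominating e D -> ~ eds e D ->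
  #|T| = #|D| * (maxdeg e + 1) - 1 ->
  excess D = 1 /\ forall d, d \in D -> deg e d = maxdeg e.
Proof.
move=> domD not_eds tight.
have sumE := card_add_excess domD.
have ex_gt0 := excess_gt0 domD not_eds.
have [le_sum eq_sum] := sum_deg_leqif D.
have /eqP : \sum_(d in D) (deg e d).+1 = #|D| * (maxdeg e + 1) by lia.
rewrite eq_sum => /forall_inP max_deg; split; first lia.
by move=> d /max_deg /eqP.
Qed.

Lemma card_eq_of_excess1 (D : {set T}) : dominating e D -> excess D = 1 ->
  (forall d, d \in D -> deg e d = maxdeg e) ->
  #|T| = #|D| * (maxdeg e + 1) - 1.
Proof.
move=> domD ex1 max_deg; have := card_add_excess domD; rewrite ex1.
have /eqP -> : \sum_(d in D) (deg e d).+1 == #|D| * (maxdeg e + 1).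
  by rewrite (sum_deg_leqif D).2; apply/forall_inP => d /max_deg ->.
lia.
Qed.

End Excess.

Theorem corollary3p10 (T : finType) (e : rel T)
  (e_sym : symmetric e) (e_irr : irreflexive e) :
  hypo_efficient e ->
  #|T| <= gamma e * (maxdeg e + 1) - 1 /\
  (#|T| = gamma e * (maxdeg e + 1) - 1 ->
     (forall D : {set T}, gamma_set e D ->
        exists y : T,
          [/\ y \notin D, eds_del e y D, #|nbhd e y :&: D| = 2
            & forall z : T, z \notin D -> eds_del e z D -> z = y])
     /\ (forall v : T, (exists2 D : {set T}, gamma_set e D & v \in D) ->
            deg e v = maxdeg e)
     /\ ((forall v : T, exists2 D : {set T}, gamma_set e D & v \in D) ->
            regular e)) /\
  ((exists (D : {set T}) (y : T),
      [/\ gamma_set e D, y \notin D, eds_del e y D, #|nbhd e y :&: D| = 2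
        & forall v : T, v \in D -> deg e v = maxdeg e]) ->
   #|T| = gamma e * (maxdeg e + 1) - 1).
Proof.
move=> [no_eds _].
have not_eds D : ~ eds e D by move=> edsD; apply: no_eds; exists D.
have tight_gamma_set D : gamma_set e D ->
    #|T| = gamma e * (maxdeg e + 1) - 1 ->
    excess e D = 1 /\ forall d, d \in D -> deg e d = maxdeg e.
  by move=> [domD <-]; exact: (card_eq_excess_bound e_sym e_irr domD (not_eds D)).
split; last split.
- have [D [domD <-]] := gamma_set_exists e.
  exact: (card_le_excess_bound e_sym e_irr domD (not_eds D)).
- move=> tight; have deg_max v : (exists2 D, gamma_set e D & v \in D) ->
      deg e v = maxdeg e.
    by move=> [D gD vD]; apply: (tight_gamma_set D gD tight).2.
  split; last by split=> // cover u v; rewrite !deg_max.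
  move=> D gD; apply: (excess1_eds_del e_sym e_irr); first by case: gD.
  exact: (tight_gamma_set D gD tight).1.
- move=> [D [y [[domD <-] yD eds_y y2 max_deg]]].
  have ex1 := eds_del_excess1 e_irr domD yD eds_y y2.
  exact: (card_eq_of_excess1 e_sym e_irr domD ex1 max_deg).
Qed.
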